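(* Let $G=(V,E)$ be a finite, simple, connected reflective graph and let $z\in V$. Suppose the subgraph induced on $S_1(z)$ is disconnected. Then $G$ is a cartesian product of two non-trivial graphs.
   Context: $d$ is the combinatorial distance and $S_1(z)=\{v:d(v,z)=1\}$. For adjacent $x\sim y$ let $V_x^y=\{v: d(v,x)<d(v,y)\}$, $V^{xy}=\{v:d(v,x)=d(v,y)\}$. A reflection from $x$ to $y$ is a graph automorphism $\phi$ with $\phi\circ\phi=\mathrm{id}$, $\phi(x)=y$, such that the edges between $V_x^y$ and $V_y^x$ are exactly $\{\{x',\phi(x')\}:x'\in V_x^y\}$ and $\phi$ fixes $V^{xy}$ pointwise. $G$ is reflective if every edge admits a reflection. Cartesian product: $(a,b)\sim(a',b')$ iff ($a=a'$, $b\sim b'$) or ($a\sim a'$, $b=b'$); non-trivial means having at least two vertices. *)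

From mathcomp Require Import all_boot.

Set Implicit Arguments. Unset Strict Implicit. Unset Printing Implicit Defensive.

Section Graphs.
Variables (T : finType) (e : rel T).

Definition simple_graph := symmetric e /\ irreflexive e.

Definition connected_graph := forall x y : T, connect e x y.

Definition walk_of_len (x y : T) (n : nat) : bool :=
  [exists p : n.-tuple T, path e x p && (last x p == y)].

(* combinatorial distance: least n admitting a walk of length n
   (shortest walks are paths, of length < #|T|); #|T| if unreachable *)
Definition gdist (x y : T) : nat :=
  find (walk_of_len x y) (iota 0 #|T|).

Definition sphere1 (z : T) : {set T} := [set v | gdist v z == 1].

Definition Vside (x y : T) : {set T} := [set v | gdist v x < gdist v y].
Definition Vmid (x y : T) : {set T} := [set v | gdist v x == gdist v y].

Definition automorphism (phi : T -> T) :=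
  bijective phi /\ forall u v, e (phi u) (phi v) = e u v.

Definition reflection (x y : T) (phi : T -> T) :=
  [/\ automorphism phi, (forall u, phi (phi u) = u), phi x = y &
   [/\
      (forall u, u \in Vside x y -> phi u \in Vside y x /\ e u (phi u)),
      (forall u v, u \in Vside x y -> v \in Vside y x -> e u v -> v = phi u)
    & (forall v, v \in Vmid x y -> phi v = v)]].

Definition reflective := forall x y, e x y -> exists phi, reflection x y phi.

Definition induced_disconnected (S : {set T}) :=
  exists x y, [/\ x \in S, y \in S &
    ~~ connect (fun u v => [&& e u v, u \in S & v \in S]) x y].

End Graphs.

Definition cart_rel (A B : finType) (ea : rel A) (eb : rel B) : rel (A * B) :=
  fun p q => ((p.1 == q.1) && eb p.2 q.2) || (ea p.1 q.1 && (p.2 == q.2)).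

Definition is_cartesian_product (T : finType) (e : rel T) :=
  exists (A B : finType) (ea : rel A) (eb : rel B) (f : T -> A * B),
    [/\ simple_graph ea, simple_graph eb, 1 < #|A|, 1 < #|B| &
        bijective f /\ forall u v, e u v = cart_rel ea eb (f u) (f v)].

(* Split the neighbourhood of z into nonempty parts C and D with no edges
   between them, and let s n be the reflection from z to the neighbour n.  For
   c in C and b in D, the vertices z, c, s c b, b form a square, and s b is also
   the reflection from c to s c b; as reflections are unique, s c and s b
   commute.  Every vertex is reached from z by a word in the s n, so it has the
   form g (h z) with g a product of reflections in C and h one in D.  The
   vertices g z lie in the set of vertices closer to z than to every b in D,
   the vertices h z in the set of vertices closer to z than to every c in C,
   and these two sets meet only in z.  Hence g z and h z are determined by the
   vertex, and sending it to (g z, h z) is an isomorphism onto the product of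
   the subgraphs induced on the two sets. *)

From Stdlib Require Import ClassicalEpsilon.
From mathcomp Require Import all_boot zify.

Set Implicit Arguments. Unset Strict Implicit. Unset Printing Implicit Defensive.

Section Graph.
Variables (T : finType) (e : rel T).
Local Notation d := (gdist e).

Lemma walk_of_lenP x y n :
  reflect (exists p : seq T, [/\ size p = n, path e x p & last x p = y])
          (walk_of_len e x y n).
Proof.
apply: (iffP existsP) => [[p /andP[hp /eqP hl]]|[p [hs hp hl]]].
  by exists (val p); rewrite size_tuple.
have hs' : size p == n by rewrite hs.
by exists (Tuple hs'); rewrite /= hp hl eqxx.
Qed.

Lemma walk_of_len0 x y : walk_of_len e x y 0 = (x == y).
Proof.
apply/walk_of_lenP/eqP => [[p [/size0nil -> _ <-]] //|<-].
by exists [::].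
Qed.

Lemma walk_of_lenSP x y n :
  reflect (exists2 w, e x w & walk_of_len e w y n) (walk_of_len e x y n.+1).
Proof.
apply: (iffP (walk_of_lenP _ _ _)) => [[[|w p] [//= [hs] /andP[hxw hp] hl]]|[w hxw]].
  by exists w => //; apply/walk_of_lenP; exists p.
by case/walk_of_lenP=> p [hs hp hl]; exists (w :: p); rewrite /= hs hxw hp.
Qed.

Lemma walk_of_len1 x y : walk_of_len e x y 1 = e x y.
Proof.
apply/walk_of_lenSP/idP => [[w hxw]|hxy]; last by exists y; rewrite ?walk_of_len0.
by rewrite walk_of_len0 => /eqP <-.
Qed.

Lemma walk_of_len_cat x y u m n :
  walk_of_len e x y m -> walk_of_len e y u n -> walk_of_len e x u (m + n).
Proof.
elim: m x => [|m IH] x; first by rewrite walk_of_len0 => /eqP ->.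
by case/walk_of_lenSP=> w hxw /IH hw /hw ?; rewrite addSn; apply/walk_of_lenSP; exists w.
Qed.

Lemma walk_of_len_mono (f : T -> T) x y n : {mono f : u v / e u v} ->
  walk_of_len e x y n -> walk_of_len e (f x) (f y) n.
Proof.
move=> fe; elim: n x => [|n IH] x; first by rewrite !walk_of_len0 => /eqP ->.
by case/walk_of_lenSP=> w hxw /IH hw; apply/walk_of_lenSP; exists (f w); rewrite ?fe.
Qed.

Lemma gdist_le x y n : walk_of_len e x y n -> d x y <= n.
Proof.
move=> hw; case: (ltnP n #|T|) => hn; last first.
  by apply: leq_trans (find_size _ _) _; rewrite size_iota.
rewrite leqNgt; apply/negP=> /(before_find 0).
by rewrite nth_iota // add0n hw.
Qed.

Lemma gdistxx x : d x x = 0.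
Proof. by apply/eqP; rewrite -leqn0 gdist_le ?walk_of_len0. Qed.

Hypothesis e_sym : symmetric e.
Hypothesis e_irr : irreflexive e.
Hypothesis e_conn : connected_graph e.

Lemma walk_of_len_sym x y n : walk_of_len e x y n -> walk_of_len e y x n.
Proof.
elim: n x => [|n IH] x; first by rewrite !walk_of_len0 eq_sym.
case/walk_of_lenSP=> w hxw /IH hw; rewrite -addn1.
by apply: walk_of_len_cat hw _; rewrite walk_of_len1 e_sym.
Qed.

Lemma walk_of_len_gdist x y : walk_of_len e x y (d x y).
Proof.
have /connectP[p /shortenP[p' hp' hu _] ->] := e_conn x y.
have hp : walk_of_len e x (last x p') (size p').
  by apply/walk_of_lenP; exists p'.
have hhas : has (walk_of_len e x (last x p')) (iota 0 #|T|).
  apply/hasP; exists (size p') => //; rewrite mem_iota add0n.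
  by rewrite -[(size p').+1]/(size (x :: p')) -(card_uniqP hu) max_card.
have := nth_find 0 hhas; rewrite /gdist nth_iota ?add0n //.
by move: hhas; rewrite has_find size_iota.
Qed.

Lemma gdist_eq0 x y : (d x y == 0) = (x == y).
Proof.
apply/eqP/eqP => [h|->]; last exact: gdistxx.
by apply/eqP; rewrite -walk_of_len0 -h walk_of_len_gdist.
Qed.

Lemma gdistC x y : d x y = d y x.
Proof.
by apply/eqP; rewrite eqn_leq !gdist_le // walk_of_len_sym // walk_of_len_gdist.
Qed.

Lemma gdist_triangle x y u : d x u <= d x y + d y u.
Proof. by apply/gdist_le/walk_of_len_cat; apply: walk_of_len_gdist. Qed.

Lemma gdist_eq1 x y : (d x y == 1) = e x y.
Proof.
apply/eqP/idP => [h|hxy]; first by rewrite -walk_of_len1 -h walk_of_len_gdist.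
apply/eqP; rewrite eqn_leq gdist_le ?walk_of_len1 // lt0n gdist_eq0.
by apply: contraTneq hxy => ->; rewrite e_irr.
Qed.

Lemma gdist_edge x y : e x y -> d x y = 1.
Proof. by rewrite -gdist_eq1 => /eqP. Qed.

Lemma gdist_ge2 x y : x != y -> ~~ e x y -> 1 < d x y.
Proof.
by rewrite -gdist_eq0 -gdist_eq1; case: (d x y) => [|[|]].
Qed.

Lemma gdist_edge_le a b u : e a b -> d a u <= (d b u).+1.
Proof. by move=> hab; rewrite -add1n -(gdist_edge hab) gdist_triangle. Qed.

Lemma gdist_next x y :
  x != y -> exists2 w, e x w & (d w y).+1 = d x y.
Proof.
rewrite -gdist_eq0; have := walk_of_len_gdist x y.
case hd: (d x y) => [|n] // /walk_of_lenSP[w hxw /gdist_le hw] _.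
exists w => //; apply/eqP; rewrite eqn_leq ltnS hw -hd.
by rewrite -add1n -(gdist_edge hxw) gdist_triangle.
Qed.

Lemma gdist_invol (f : T -> T) : {mono f : u v / e u v} -> involutive f ->
  forall x y, d (f x) (f y) = d x y.
Proof.
move=> fe fK; have le_f x y : d (f x) (f y) <= d x y.
  exact/gdist_le/walk_of_len_mono/walk_of_len_gdist.
move=> x y; apply/eqP; rewrite eqn_leq le_f //=.
by rewrite -{1}(fK x) -{1}(fK y) le_f.
Qed.

Definition induced (A : {set T}) : rel {x | x \in A} := fun u v => e (val u) (val v).

Lemma induced_simple (A : {set T}) : simple_graph (@induced A).
Proof. by split=> [u v|u]; [apply: e_sym | apply: e_irr]. Qed.

Lemma induced_disconnected_split (S : {set T}) :
  induced_disconnected e S ->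
  exists C D : {set T}, [/\ C :|: D = S, C != set0, D != set0 &
    {in C & D, forall c b, (c != b) && ~~ e c b}].
Proof.
case=> a [b [haS hbS hab]].
set eS := (fun u v => [&& e u v, u \in S & v \in S]) in hab.
pose C := [set v in S | connect eS a v].
have hC : a \in C by rewrite inE haS connect0.
have hD : b \in S :\: C by rewrite !inE hbS (negPf hab).
exists C, (S :\: C); split.
- by apply/setP=> v; rewrite !inE; case: (v \in S); case: connect.
- by apply/set0Pn; exists a.
- by apply/set0Pn; exists b.
move=> c v; rewrite !inE => /andP[hcS hac] /andP[hvC hvS].
rewrite hvS /= in hvC; apply/andP; split.
  by apply: contraNneq hvC => <-.
apply: contra hvC => hcv; apply: connect_trans hac (connect1 _).
by rewrite /eS hcv hcS hvS.
Qed.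

Lemma sphere1E z : sphere1 e z = [set n | e z n].
Proof. by apply/setP=> n; rewrite !inE gdist_eq1 // e_sym. Qed.

Lemma VmidE x y : Vmid e x y = ~: (Vside e x y :|: Vside e y x).
Proof. by apply/setP=> u; rewrite !inE; case: ltngtP. Qed.

Section Involution.
Variable g : T -> T.
Hypotheses (ge : {mono g : u v / e u v}) (gK : involutive g).

Lemma gdist_invol_r u v : d u (g v) = d (g u) v.
Proof. by rewrite -(gdist_invol ge gK) gK. Qed.

Lemma mem_Vside_invol x y u : (g u \in Vside e x y) = (u \in Vside e (g x) (g y)).
Proof. by rewrite !inE !gdist_invol_r. Qed.

Lemma mem_Vmid_invol x y u : (g u \in Vmid e x y) = (u \in Vmid e (g x) (g y)).
Proof. by rewrite !inE !gdist_invol_r. Qed.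

End Involution.

Section Reflection.
Variables (x y : T) (r : T -> T).
Hypothesis hr : reflection e x y r.

Lemma refl_mono : {mono r : u v / e u v}.
Proof. by case: hr => -[]. Qed.

Lemma refl_invol : involutive r.
Proof. by case: hr. Qed.

Lemma refl_gdist u v : d (r u) (r v) = d u v.
Proof. exact: (gdist_invol refl_mono refl_invol). Qed.

Lemma refl_x : r x = y.
Proof. by case: hr. Qed.

Lemma refl_y : r y = x.
Proof. by rewrite -refl_x refl_invol. Qed.

Lemma refl_Vside u : (r u \in Vside e x y) = (u \in Vside e y x).
Proof. by rewrite (mem_Vside_invol refl_mono refl_invol) refl_x refl_y. Qed.

Lemma refl_edge u : u \in Vside e x y -> e u (r u).
Proof. by case: hr => _ _ _ [h _ _] /h[]. Qed.

Lemma refl_cross u v :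
  u \in Vside e x y -> v \in Vside e y x -> e u v -> v = r u.
Proof. by case: hr => _ _ _ [_ h _]; apply: h. Qed.

Lemma refl_fix u : u \in Vmid e x y -> r u = u.
Proof. by case: hr => _ _ _ [_ _ h]; apply: h. Qed.

Lemma refl_Vmid_sub p q : r p = q -> {subset Vmid e x y <= Vmid e p q}.
Proof.
move=> hrp u hu; rewrite inE -hrp.
by rewrite (gdist_invol_r refl_mono refl_invol) (refl_fix hu).
Qed.

End Reflection.

Lemma refl_unique x y r1 r2 :
  reflection e x y r1 -> reflection e x y r2 -> r1 =1 r2.
Proof.
move=> h1 h2.
have side u : u \in Vside e x y -> r1 u = r2 u.
  move=> hu; apply/esym/(refl_cross h1 hu _ (refl_edge h2 hu)).
  by rewrite -(refl_Vside h2) (refl_invol h2).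
move=> u; case: (ltngtP (d u x) (d u y)) => hu.
- by apply: side; rewrite inE.
- have /side : r1 u \in Vside e x y by rewrite (refl_Vside h1) inE.
  by rewrite (refl_invol h1) => {2}->; rewrite (refl_invol h2).
- by rewrite (refl_fix h1) ?(refl_fix h2) // inE hu.
Qed.

Lemma refl_conj x y r g : reflection e x y r ->
  {mono g : u v / e u v} -> involutive g ->
  reflection e (g x) (g y) (fun u => g (r (g u))).
Proof.
move=> hr ge gK; have rK := refl_invol hr.
split; [split | by move=> u; rewrite gK rK gK | by rewrite gK (refl_x hr) |].
- by exists (fun u => g (r (g u))) => u; rewrite gK rK gK.
- by move=> u v; rewrite ge (refl_mono hr) ge.
split=> [u|u v|u]; rewrite -?(mem_Vside_invol ge gK) -?(mem_Vmid_invol ge gK).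
- by move=> hu; rewrite gK -(refl_Vside hr) rK hu -[u in e u _]gK ge (refl_edge hr hu).
- by move=> hu hv huv; rewrite -(refl_cross hr hu hv) ?gK // ge.
- by move=> /(refl_fix hr) ->; rewrite gK.
Qed.

Lemma refl_Vside_eq x y p q r : reflection e x y r -> r p = q ->
  Vside e x y = Vside e p q -> reflection e p q r.
Proof.
move=> hr hrp hxy; have hrq : r q = p by rewrite -hrp (refl_invol hr).
have hyx : Vside e y x = Vside e q p.
  apply/setP=> u; rewrite -(refl_Vside hr) hxy.
  by rewrite (mem_Vside_invol (refl_mono hr) (refl_invol hr)) hrp hrq.
case: hr => haut hK _ [hside hcross hfix]; split=> //.
by split; rewrite -?hxy -?hyx // VmidE -hxy -hyx -VmidE.
Qed.

Section Transfer.
Variables (x y p q : T) (r r' : T -> T).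
Hypotheses (hr : reflection e x y r) (hr' : reflection e p q r').
Hypotheses (hrp : r p = q) (hr'x : r' x = y) (hx : x \in Vside e p q).

(* Let u1 be the next vertex on a geodesic from u to x: it is still on the
   x-side, hence by induction on the p-side.  If u were on the q-side, the edge
   u1 u would cross, so u = r' u1 and d u y = d u1 x < d u x; if u were
   equidistant from p and q, r' would fix it and it would be equidistant from
   x and y. *)
Lemma refl_Vside_sub : {subset Vside e x y <= Vside e p q}.
Proof.
move=> u; have [n] := ubnP (d u x); elim: n u => // n IH u.
rewrite ltnS => hn hu; case: (eqVneq u x) => [-> //|hux].
have [u1 hu1 hd1] := gdist_next hux.
have hu1xy : u1 \in Vside e x y.
  by move: hu; rewrite !inE -hd1; have := gdist_edge_le y hu1; lia.
have hu1pq : u1 \in Vside e p q by apply: IH hu1xy; rewrite -hd1 in hn.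
move: (hu); rewrite !inE; case: (ltngtP (d u p) (d u q)) => // hupq.
- have hu_r : u = r' u1.
    by apply: (refl_cross hr' hu1pq); rewrite ?inE // e_sym.
  have : d u y = d u1 x by rewrite hu_r -hr'x (refl_gdist hr').
  lia.
- have /(refl_Vmid_sub hr' hr'x) : u \in Vmid e p q by rewrite inE hupq.
  by rewrite inE => /eqP ->; rewrite ltnn.
Qed.

Lemma refl_transfer : Vside e x y = Vside e p q.
Proof.
apply/setP=> u; apply/idP/idP; first exact: refl_Vside_sub.
have hrq : r q = p by rewrite -hrp (refl_invol hr).
rewrite [u \in Vside e x y]inE; case: ltngtP => // hu hpq.
- have /refl_Vside_sub : r u \in Vside e x y by rewrite refl_Vside // inE.
  rewrite (mem_Vside_invol (refl_mono hr) (refl_invol hr)) hrp hrq.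
  by move: hpq; rewrite !inE => /ltnW; rewrite leqNgt => /negPf ->.
- have /(refl_Vmid_sub hr hrp) : u \in Vmid e x y by rewrite inE hu.
  by move: hpq; rewrite !inE => /ltn_eqF ->.
Qed.

End Transfer.

Hypothesis e_refl : reflective e.

Definition refl_of (x y : T) : T -> T := epsilon (inhabits id) (reflection e x y).

Lemma refl_ofP x y : e x y -> reflection e x y (refl_of x y).
Proof. by move/e_refl; apply: epsilon_spec. Qed.

Variable z : T.
Local Notation s n := (refl_of z n).

Section Square.
Variables c b : T.
Hypotheses (hc : e z c) (hb : e z b) (hcb : 1 < d c b).

(* With w := s c b, the cycle z c w b is induced; s b maps c to w and the
   reflection from c to w maps z to b, so refl_transfer applies. *)
Lemma square_refl : reflection e c (s c b) (s b) /\ Vside e z b = Vside e c (s c b).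
Proof.
have hrc := refl_ofP hc; have hrb := refl_ofP hb.
set w := s c b.
have dbz : d b z = 1 by rewrite gdist_edge // e_sym.
have dcz : d c z = 1 by rewrite gdist_edge // e_sym.
have hbw : e b w by apply: (refl_edge hrc); rewrite inE dbz gdistC.
have hcw : e c w by rewrite -(refl_x hrc) (refl_mono hrc).
have dwz : d w z = d b c by rewrite -(refl_y hrc) (refl_gdist hrc).
have dwb : d w b = 1 by rewrite gdist_edge // e_sym.
have hsbc : s b c = w.
  apply/esym/(refl_cross hrb) => //; rewrite inE.
  - by rewrite dcz.
  - by rewrite dwb dwz gdistC.
have hrcw := refl_ofP hcw.
have hz : z \in Vside e c w by rewrite inE gdistC dcz gdistC dwz gdistC.
have hrcwz : refl_of c w z = b.
  by apply/esym/(refl_cross hrcw hz); rewrite // inE gdistC dwb gdistC.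
have hzbcw := refl_transfer hrb hrcw hsbc hrcwz hz.
by split=> //; apply: refl_Vside_eq hsbc hzbcw.
Qed.

Lemma square_comm u : s c (s b u) = s b (s c u).
Proof.
have hrc := refl_ofP hc; have [hrb _] := square_refl.
have := refl_conj (refl_ofP hb) (refl_mono hrc) (refl_invol hrc).
rewrite (refl_x hrc) => /refl_unique/(_ hrb (s c u)).
by rewrite (refl_invol hrc).
Qed.

Lemma square_Vside u : u \in Vside e z b -> s c u \in Vside e z b.
Proof.
have hrc := refl_ofP hc; have [_ hVside] := square_refl.
by rewrite (mem_Vside_invol (refl_mono hrc) (refl_invol hrc)) (refl_x hrc) -hVside.
Qed.

End Square.

Definition act (l : seq T) (u : T) : T := foldr (refl_of z) u l.

Lemma act_cat l m u : act (l ++ m) u = act l (act m u).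
Proof. by rewrite /act foldr_cat. Qed.

Lemma act_rcons l n u : act (rcons l n) u = act l (s n u).
Proof. by rewrite -cats1 act_cat. Qed.

Lemma act_mono l : all (e z) l -> {mono act l : u v / e u v}.
Proof.
elim: l => [_ //|n l IH] /andP[hn /IH hl] u v /=.
by rewrite (refl_mono (refl_ofP hn)).
Qed.

Lemma act_revK l : all (e z) l -> cancel (act l) (act (rev l)).
Proof.
elim: l => [_ //|n l IH] /andP[hn hl] u /=.
by rewrite rev_cons act_rcons (refl_invol (refl_ofP hn)) IH.
Qed.

Lemma act_Krev l : all (e z) l -> cancel (act (rev l)) (act l).
Proof. by move=> hl u; rewrite -{1}(revK l) act_revK ?all_rev. Qed.

Lemma act_adj l u : all (e z) l -> e (act l z) u -> exists2 n, e z n & u = act l (s n z).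
Proof.
move=> hl hu; set n := act (rev l) u.
have hn : e z n by rewrite -(act_mono hl) act_Krev.
by exists n; rewrite // (refl_x (refl_ofP hn)) act_Krev.
Qed.

Section Product.
Variables C D : {set T}.
Hypothesis CD_nbr : forall n, e z n = (n \in C) || (n \in D).
Hypothesis CD_sep : {in C & D, forall c b, (c != b) && ~~ e c b}.

Lemma C_nbr c : c \in C -> e z c.
Proof. by move=> hc; rewrite CD_nbr hc. Qed.

Lemma D_nbr b : b \in D -> e z b.
Proof. by move=> hb; rewrite CD_nbr hb orbT. Qed.

Lemma all_C_nbr l : all (mem C) l -> all (e z) l.
Proof. by apply: sub_all => c /C_nbr. Qed.

Lemma all_D_nbr l : all (mem D) l -> all (e z) l.
Proof. by apply: sub_all => b /D_nbr. Qed.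

Lemma gdist_CD : {in C & D, forall c b, 1 < d c b}.
Proof. by move=> c b hc hb; have /andP[] := CD_sep hc hb; apply: gdist_ge2. Qed.

Lemma act_comm l m u :
  all (mem C) l -> all (mem D) m -> act l (act m u) = act m (act l u).
Proof.
have comm1 c v : c \in C -> all (mem D) m -> s c (act m v) = act m (s c v).
  move=> hc; elim: m v => [//|b m IH] v /= /andP[hb hm].
  by rewrite (square_comm (C_nbr hc) (D_nbr hb) (gdist_CD hc hb)) IH.
by elim: l u => [//|c l IH] u /= /andP[hc hl] hm; rewrite IH // comm1.
Qed.

Definition fibreC := \bigcap_(b in D) Vside e z b.
Definition fibreD := \bigcap_(c in C) Vside e z c.

Lemma z_fibreC : z \in fibreC.
Proof. by apply/bigcapP=> b /D_nbr hb; rewrite inE gdistxx gdist_edge. Qed.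

Lemma z_fibreD : z \in fibreD.
Proof. by apply/bigcapP=> c /C_nbr hc; rewrite inE gdistxx gdist_edge. Qed.

Lemma C_fibreC : {subset C <= fibreC}.
Proof.
move=> c hc; apply/bigcapP=> b hb.
by rewrite inE gdistC (gdist_edge (C_nbr hc)) gdist_CD.
Qed.

Lemma D_fibreD : {subset D <= fibreD}.
Proof.
move=> b hb; apply/bigcapP=> c hc.
by rewrite inE gdistC (gdist_edge (D_nbr hb)) gdistC gdist_CD.
Qed.

Lemma act_fibreC l u : all (mem C) l -> u \in fibreC -> act l u \in fibreC.
Proof.
elim: l => [//|c l IH] /= /andP[hc /IH hl] /hl hu.
apply/bigcapP=> b hb; apply: (square_Vside (C_nbr hc) (D_nbr hb) (gdist_CD hc hb)).
exact: (bigcapP hu).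
Qed.

Lemma act_fibreD l u : all (mem D) l -> u \in fibreD -> act l u \in fibreD.
Proof.
elim: l => [//|b l IH] /= /andP[hb /IH hl] /hl hu.
apply/bigcapP=> c hc; apply: (square_Vside (D_nbr hb) (C_nbr hc)).
  by rewrite gdistC gdist_CD.
exact: (bigcapP hu).
Qed.

Lemma fibreCD_z v : v \in fibreC -> v \in fibreD -> v = z.
Proof.
move=> /bigcapP hC /bigcapP hD; case: (eqVneq z v) => [//|hzv].
have [n hn hd] := gdist_next hzv.
have hvn : d v n < d v z by rewrite (gdistC v n) (gdistC v z) -hd.
move: hn; rewrite CD_nbr => /orP[/hD|/hC]; rewrite inE => /(ltn_trans hvn);
  by rewrite ltnn.
Qed.

Lemma act_adj_CD l m u : all (mem C) l -> all (mem D) m ->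
  e (act l (act m z)) u ->
  exists n, (n \in C /\ u = act (rcons l n) (act m z)) \/
            (n \in D /\ u = act l (act (rcons m n) z)).
Proof.
move=> hl hm; rewrite -act_cat => /act_adj[|n hn ->].
  by rewrite all_cat all_C_nbr ?all_D_nbr.
exists n; rewrite act_cat; move: hn; rewrite CD_nbr => /orP[hnC|hnD]; [left|right].
- split=> //; rewrite act_rcons; congr act.
  by apply/esym/(@act_comm [:: n]); rewrite //= hnC.
- by split=> //; rewrite act_rcons.
Qed.

Definition is_coords v (lm : seq T * seq T) :=
  [&& all (mem C) lm.1, all (mem D) lm.2 & v == act lm.1 (act lm.2 z)].

Lemma coords_exists v : exists lm, is_coords v lm.
Proof.
have /connectP[p hp ->] := e_conn z v.
elim/last_ind: p hp => [_|p u IH].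
  by exists ([::], [::]); rewrite /is_coords /= eqxx.
rewrite rcons_path last_rcons => /andP[/IH[[l m] /and3P[/= hl hm /eqP hv]]].
rewrite hv => /(act_adj_CD hl hm)[n [[hn ->]|[hn ->]]].
- by exists (rcons l n, m); rewrite /is_coords /= all_rcons hl hm eqxx !andbT.
- by exists (l, rcons m n); rewrite /is_coords /= all_rcons hl hm eqxx !andbT.
Qed.

Lemma act_inj_CD l m l' m' :
  all (mem C) l -> all (mem D) m -> all (mem C) l' -> all (mem D) m' ->
  act l (act m z) = act l' (act m' z) -> act l z = act l' z /\ act m z = act m' z.
Proof.
move=> hl hm hl' hm' hlm.
set g := rev l' ++ l; set h := rev m ++ m'.
have hg : all (mem C) g by rewrite all_cat all_rev hl' hl.
have hh : all (mem D) h by rewrite all_cat all_rev hm hm'.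
have ghz : act g z = act h z.
  rewrite [RHS]act_cat; apply: (canRL (act_revK (all_D_nbr hm))).
  by rewrite -act_comm // act_cat hlm act_revK ?all_C_nbr.
have gz : act g z = z.
  apply: fibreCD_z; first exact: act_fibreC hg z_fibreC.
  by rewrite ghz; apply: act_fibreD hh z_fibreD.
split.
  by rewrite -[in RHS]gz act_cat act_Krev ?all_C_nbr.
by rewrite -[in LHS]gz ghz act_cat act_Krev ?all_D_nbr.
Qed.

Definition coords v : seq T * seq T := xchoose (coords_exists v).
Definition projC v := act (coords v).1 z.
Definition projD v := act (coords v).2 z.

Lemma coordsP v :
  [/\ all (mem C) (coords v).1, all (mem D) (coords v).2 & v = act (coords v).1 (projD v)].
Proof. by have /and3P[hl hm /eqP hv] := xchooseP (coords_exists v). Qed.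

Lemma act_coordsD v : act (coords v).2 (projC v) = v.
Proof.
by have [hl hm hv] := coordsP v; rewrite [RHS]hv /projC /projD (act_comm _ hl hm).
Qed.

Lemma projC_fibreC v : projC v \in fibreC.
Proof. by have [hl _ _] := coordsP v; apply: act_fibreC hl z_fibreC. Qed.

Lemma projD_fibreD v : projD v \in fibreD.
Proof. by have [_ hm _] := coordsP v; apply: act_fibreD hm z_fibreD. Qed.

Lemma proj_act l m : all (mem C) l -> all (mem D) m ->
  projC (act l (act m z)) = act l z /\ projD (act l (act m z)) = act m z.
Proof.
move=> hl hm; have [hl' hm' hv] := coordsP (act l (act m z)).
exact: act_inj_CD hl' hm' hl hm (esym hv).
Qed.

Lemma projC_id y : y \in fibreC -> projC y = y.
Proof.
move=> hy; have [hl hm hv] := coordsP y.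
suff hmz : projD y = z by rewrite [RHS]hv hmz.
apply: fibreCD_z (projD_fibreD y).
rewrite -(act_revK (all_C_nbr hl) (projD y)) -hv.
by apply: act_fibreC hy; rewrite all_rev.
Qed.

Lemma projD_id x : x \in fibreD -> projD x = x.
Proof.
move=> hx; have [hl hm _] := coordsP x.
suff hlz : projC x = z by rewrite -[RHS]act_coordsD hlz.
apply: fibreCD_z (projC_fibreC x) _.
rewrite -(act_revK (all_D_nbr hm) (projC x)) act_coordsD.
by apply: act_fibreD hx; rewrite all_rev.
Qed.

Lemma act_projC l v : all (mem C) l -> act l z = projC v -> act l (projD v) = v.
Proof.
have [_ hm _] := coordsP v => hl hlv.
by rewrite /projD (act_comm _ hl hm) hlv act_coordsD.
Qed.

Lemma act_projD m v : all (mem D) m -> act m z = projD v -> act m (projC v) = v.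
Proof.
have [hl _ hv] := coordsP v => hm hmv.
by rewrite /projC -(act_comm _ hl hm) hmv -hv.
Qed.

Lemma edge_projE u v : e u v =
  (projC u == projC v) && e (projD u) (projD v) ||
  e (projC u) (projC v) && (projD u == projD v).
Proof.
have [hl hm hu] := coordsP u; have hlz := all_C_nbr hl; have hmz := all_D_nbr hm.
apply/idP/idP => [|/orP[/andP[/eqP hC hD]|/andP[hC /eqP hD]]].
- rewrite {1}hu => /(act_adj_CD hl hm)[n [[hn ->]|[hn ->]]].
  + have hln : all (mem C) (rcons (coords u).1 n) by rewrite all_rcons hl andbT.
    have [-> ->] := proj_act hln hm; rewrite /projC /projD act_rcons (act_mono hlz).
    by rewrite (refl_x (refl_ofP (C_nbr hn))) (C_nbr hn) eqxx orbT.
  + have hmn : all (mem D) (rcons (coords u).2 n) by rewrite all_rcons hm andbT.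
    have [-> ->] := proj_act hl hmn; rewrite /projC /projD act_rcons (act_mono hmz).
    by rewrite (refl_x (refl_ofP (D_nbr hn))) (D_nbr hn) eqxx.
- have hv := act_projC hl (hC : act (coords u).1 z = projC v).
  by rewrite hu -hv (act_mono hlz).
- have hv := act_projD hm (hD : act (coords u).2 z = projD v).
  by rewrite -(act_coordsD u) -hv (act_mono hmz).
Qed.

Definition to_prod v : {y | y \in fibreC} * {x | x \in fibreD} :=
  (exist _ (projC v) (projC_fibreC v), exist _ (projD v) (projD_fibreD v)).

Definition of_prod (p : {y | y \in fibreC} * {x | x \in fibreD}) : T :=
  act (coords (val p.1)).1 (val p.2).

Lemma to_prodK : cancel to_prod of_prod.
Proof.
move=> v; have [hl _ _] := coordsP (projC v).
exact: act_projC hl (projC_id (projC_fibreC v)).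
Qed.

Lemma of_prodK : cancel of_prod to_prod.
Proof.
move=> [[y hy] [x hx]]; rewrite /of_prod /=.
have [hl _ _] := coordsP y; have [_ hm _] := coordsP x.
have := proj_act hl hm; rewrite -/(projD x) projD_id // => -[hCy hDx].
by congr (_, _); apply: val_inj => /=; [rewrite hCy; exact: projC_id | exact: hDx].
Qed.

Lemma cartesian_of_nbr_split : C != set0 -> D != set0 -> is_cartesian_product e.
Proof.
case/set0Pn=> a ha /set0Pn[b hb].
exists {y | y \in fibreC}, {x | x \in fibreD}.
exists (@induced fibreC), (@induced fibreD), to_prod.
split; [exact: induced_simple | exact: induced_simple | | |].
- rewrite card_sig; apply/card_gt1P; exists z, a; rewrite !inE z_fibreC C_fibreC //.
  by split=> //; apply: contraTneq _ (C_nbr ha) => <-; rewrite e_irr.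
- rewrite card_sig; apply/card_gt1P; exists z, b; rewrite !inE z_fibreD D_fibreD //.
  by split=> //; apply: contraTneq _ (D_nbr hb) => <-; rewrite e_irr.
split; first exact: Bijective to_prodK of_prodK.
by move=> u v; rewrite edge_projE /cart_rel /induced /= -!val_eqE.
Qed.

End Product.
End Graph.

Theorem lemma2p7 (T : finType) (e : rel T) (z : T) :
  simple_graph e -> connected_graph e -> reflective e ->
  induced_disconnected e (sphere1 e z) ->
  is_cartesian_product e.
Proof.
move=> [e_sym e_irr] e_conn e_refl /induced_disconnected_split[C [D [hCD hC hD hsep]]].
apply: (cartesian_of_nbr_split e_sym e_irr e_conn e_refl (z := z) _ hsep hC hD) => n.
by rewrite -in_setU hCD (sphere1E e_sym e_irr e_conn) inE.
Qed.
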